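(* Let $(X,\kappa)$ be a finite digital image and $f:X\to X$ a continuous self-map with $L(f)\neq 0$. Then every continuous map $g:X\to X$ with $g\simeq^* f$ has a fixed point or at least two approximate fixed points.
   Context: A digital image is a pair $(X,\kappa)$ where $X$ is a set and $\kappa$ is a symmetric irreflexive relation on $X$ (the adjacency). Write $x\leftrightarrow y$ if adjacent, $x\Leftrightarrow y$ if adjacent or equal. A map $f$ is continuous if $x\leftrightarrow y$ implies $f(x)\Leftrightarrow f(y)$. A point $x$ is an approximate fixed point of $f:X\to X$ if $f(x)\Leftrightarrow x$. The digital interval $[0,m]_{\mathbb Z}$ has consecutive integers adjacent. Continuous $f,g:X\to Y$ are strongly homotopic ($f\simeq^* g$) if there exist $m\ge1$ and $H:X\times[0,m]_{\mathbb Z}\to Y$ with $H(\cdot,0)=f$, $H(\cdot,m)=g$, such that whenever $(x,t)\neq(x',t')$, $x\Leftrightarrow x'$ and $|t-t'|\le1$, we have $H(x,t)\Leftrightarrow H(x',t')$. Simplicial homology: a $q$-simplex of $X$ is a set of $q+1$ pairwise adjacent points. $C_q(X)$ is the free abelian group generated by ordered $q$-simplices $\langle x_0,\dots,x_q\rangle$ modulo $\langle x_{\rho(0)},\dots,x_{\rho(q)}\rangle=\operatorname{sgn}(\rho)\langle x_0,\dots,x_q\rangle$, with boundary $\partial\langle x_0,\dots,x_q\rangle=\sum_{i=0}^q(-1)^i\langle x_0,\dots,\widehat{x_i},\dots,x_q\rangle$; $H_q(X)$ is its homology. For continuous $f$, $f_q\langle p_0,\dots,p_q\rangle=\langle f(p_0),\dots,f(p_q)\rangle$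 (interpreted as $0$ if the image has fewer than $q+1$ points); this is a chain map inducing $f_{*,q}$ on $H_q$. The simplicial Lefschetz number of a self-map $f$ of a finite image is $L(f)=\sum_{q\ge0}(-1)^q\operatorname{tr}(f_{*,q})$, traces taken on $H_q(X)\otimes\mathbb Q$. *)

From HB Require Import structures.
From mathcomp Require Import all_boot all_order all_algebra.
Set Implicit Arguments. Unset Strict Implicit. Unset Printing Implicit Defensive.
Import Order.TTheory GRing.Theory Num.Theory.
Local Open Scope ring_scope.

Section DigitalImages.
Variables (X : finType) (k : rel X).

Definition adjeq (x y : X) : bool := (x == y) || k x y.

Definition dcontinuous (f : X -> X) : Prop :=
  forall x y, k x y -> adjeq (f x) (f y).

Definition approx_fixed (f : X -> X) (x : X) : Prop := adjeq (f x) x.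

Definition strongly_homotopic (f g : X -> X) : Prop :=
  exists (m : nat) (H : X -> nat -> X),
    (1 <= m)%N /\ (forall x, H x 0%N = f x) /\ (forall x, H x m = g x) /\
    forall x x' t t', (t <= m)%N -> (t' <= m)%N -> (x, t) <> (x', t') ->
      adjeq x x' -> (t <= t'.+1)%N -> (t' <= t.+1)%N -> adjeq (H x t) (H x' t').

(** unoriented q-simplices: sets of q+1 pairwise adjacent points.
    Each simplex A is oriented by listing its points in the enumeration
    order of X, i.e. as the ordered simplex <enum A>. *)
Definition simp (q : nat) : {set {set X}} :=
  [set A : {set X} | (#|A| == q.+1) &&
     [forall x in A, forall y in A, (x != y) ==> k x y]].

Definition simpl_of q (i : 'I_#|simp q|) : {set X} := enum_val i.

Fixpoint inversions (s : seq X) : nat :=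
  match s with
  | [::] => 0%N
  | x :: t => (count (fun y => enum_rank y < enum_rank x)%N t + inversions t)%N
  end.

(** Boundary matrix from C_{q+1} to C_q (chains are row vectors, with
    coordinates in the oriented basis above):
    the face of <a_0,...,a_{q+1}> omitting a_i has coefficient (-1)^i. *)
Definition bdmx (q : nat) : 'M[rat]_(#|simp q.+1|, #|simp q|) :=
  \matrix_(i, j)
    let A := simpl_of i in let B := simpl_of j in
    if B \subset A then (-1) ^+ (find (fun y => y \notin B) (enum A)) else 0.

(** Matrix of the chain map f_q on C_q:
    f_q <a_0..a_q> = <f a_0 .. f a_q>, which is 0 if two images coincide,
    and otherwise equals sgn(sorting permutation) * <enum (f @: A)>. *)
Definition chainmx (f : X -> X) (q : nat) : 'M[rat]_(#|simp q|) :=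
  \matrix_(i, j)
    let A := simpl_of i in let B := simpl_of j in
    if (f @: A == B) && (#|f @: A| == q.+1)
    then (-1) ^+ (inversions (map f (enum A))) else 0.

Definition cyclesmx (q : nat) : 'M[rat]_(#|simp q|) :=
  match q return 'M[rat]_(#|simp q|) with
  | 0%N => 1%:M
  | q'.+1 => kermx (bdmx q')
  end.

Definition boundmx (q : nat) : 'M[rat]_(#|simp q|) := <<bdmx q>>%MS.

(** A basis of a complement of B_q in Z_q; its span is identified with
    H_q(X) (x) Q = Z_q / B_q. *)
Definition hbasis (q : nat) := row_base (cyclesmx q :\: boundmx q)%MS.

(** Matrix of the induced map f_{*,q} on H_q(X) (x) Q in the basis hbasis:
    image of a basis vector, projected onto the complement along B_q,
    then expressed in coordinates. *)
Definition homology_mx (f : X -> X) (q : nat) :=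
  hbasis q *m chainmx f q *m proj_mx (cyclesmx q :\: boundmx q)%MS (boundmx q)
    *m pinvmx (hbasis q).

(** Simplicial Lefschetz number; simplices have dimension < #|X|. *)
Definition lefschetz (f : X -> X) : rat :=
  \sum_(q < #|X|) (-1) ^+ q * \tr (homology_mx f q).

End DigitalImages.

From HB Require Import structures.
From mathcomp Require Import all_boot all_order all_algebra.
From mathcomp Require Import ring.
Set Implicit Arguments. Unset Strict Implicit. Unset Printing Implicit Defensive.
Import Order.TTheory GRing.Theory Num.Theory.
Local Open Scope ring_scope.

(* If g has an approximate fixed point x with g x <> x, then g x is a second
   one, by continuity of g along the edge {x, g x}.  It therefore suffices to
   show that if g has no approximate fixed point at all, then L(f) = 0:
   1. freeness of approximate fixed points is transported along a strong
      homotopy, one step of the homotopy parameter at a time, so f has none;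
   2. a map without approximate fixed points maps no simplex onto itself, so
      its chain matrices have zero diagonal, hence zero trace;
   3. the Hopf trace formula L(f) = sum_q (-1)^q tr(f_q) holds for every
      self-map whose chain matrices commute with the boundary matrices of a
      chain complex; it is proved by splitting each trace along the
      decomposition of chains into boundaries, homology and a complement.
   Step 3 needs d o d = 0 and f_# o d = d o f_# for the concrete matrices
   bdmx and chainmx.  Their entries are signs: (-1)^(position of a in A) for
   faces and (-1)^(inversions) for the sorting permutation of f(A). *)

Section Signs.
Variable X : finType.
Implicit Types (A B C : {set X}) (f : X -> X).

Definition rk (x : X) : nat := enum_rank x.

Definition bsign (b : bool) : rat := if b then -1 else 1.

(* Sign of the face of <enum A> opposite to a: (-1)^(position of a in enum A). *)
Definition face_sign A (a : X) : rat := \prod_(y in A) bsign (rk y < rk a)%N.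

(* Sign of the permutation sorting the image under f of <enum A>, written as
   (-1)^(number of pairs of A whose order f reverses). *)
Definition sort_sign f A : rat :=
  \prod_(u in A) \prod_(v in A) bsign ((rk u < rk v) && (rk (f v) < rk (f u)))%N.

Lemma bsignE (b : bool) : (-1) ^+ b = bsign b.
Proof. by case: b. Qed.

Lemma expN1_sum (s : seq X) (n : X -> nat) :
  (-1) ^+ (\sum_(u <- s) n u) = \prod_(u <- s) ((-1) ^+ n u : rat).
Proof. exact: (big_morph _ (exprD _) (expr0 _)). Qed.

Lemma rk_inj : injective rk.
Proof. by move=> x y /val_inj /enum_rank_inj. Qed.

Lemma rk_neq (x y : X) : x != y -> (rk x != rk y)%N.
Proof. by apply: contra => /eqP /rk_inj ->. Qed.

Lemma enumT_sorted : pairwise (fun x y : X => rk x < rk y)%N (enum X).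
Proof.
case e : (enum X) => [|x0 s] //; rewrite -e.
have rk_nth l : (l < #|X|)%N -> rk (nth x0 (enum X) l) = l.
  move=> hl; pose o := Ordinal hl; have -> : l = o by [].
  have := nth_enum_rank x0 (enum_val o); rewrite enum_valK => ->.
  by rewrite /rk enum_valK.
by apply/(pairwiseP x0) => i j; rewrite !inE -cardE => hi hj hij; rewrite !rk_nth.
Qed.

Lemma enum_sorted A : pairwise (fun x y : X => rk x < rk y)%N (enum A).
Proof. rewrite /enum_mem -enumT; exact: pairwise_filter enumT_sorted. Qed.

Lemma index_sorted (s : seq X) a : pairwise (fun x y : X => rk x < rk y)%N s ->
  a \in s -> index a s = count (fun y => rk y < rk a)%N s.
Proof.
elim: s => [|x s IH] //= /andP[/allP hx hs]; rewrite inE.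
case: eqP => [-> _|/eqP hxa /= ha].
  rewrite ltnn add0n eqxx; apply/esym/eqP; rewrite eqn0Ngt -has_count.
  by apply/hasP => -[y /hx h1 h2]; have := ltn_trans h1 h2; rewrite ltnn.
by rewrite eq_sym (negbTE hxa) IH // (hx a ha).
Qed.

Lemma face_signE A a : a \in A ->
  (-1) ^+ find (fun y => y \notin A :\ a) (enum A) = face_sign A a.
Proof.
move=> aA.
have -> : find (fun y => y \notin A :\ a) (enum A) = index a (enum A).
  apply: eq_in_find => y; rewrite mem_enum !inE => yA /=.
  by rewrite yA andbT negbK eq_sym.
rewrite index_sorted ?enum_sorted ?mem_enum // -sumn_count sumnE big_map.
rewrite expN1_sum /face_sign -big_enum /=.
by apply: eq_bigr => y _; rewrite bsignE.
Qed.

Lemma inversions_map f s : pairwise (fun x y : X => rk x < rk y)%N s ->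
  inversions (map f s) =
  (\sum_(u <- s) \sum_(v <- s) ((rk u < rk v) && (rk (f v) < rk (f u)) : nat))%N.
Proof.
elim: s => [|x s IH]; first by rewrite big_nil.
rewrite /= => /andP[/allP hx hs]; rewrite IH // big_cons big_cons ltnn /= add0n.
congr (_ + _)%N.
  rewrite count_map -sumn_count sumnE big_map; apply: eq_big_seq => v /hx ->; by [].
apply: eq_big_seq => u /hx h; rewrite big_cons ltnNge (ltnW h) /=; by [].
Qed.

Lemma sort_signE f A : (-1) ^+ inversions (map f (enum A)) = sort_sign f A.
Proof.
rewrite inversions_map ?enum_sorted // expN1_sum /sort_sign -big_enum /=.
apply: eq_bigr => u _; rewrite expN1_sum -big_enum /=.
by apply: eq_bigr => v _; rewrite bsignE.
Qed.

End Signs.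
Arguments bsign : simpl never.

(* Face and sorting signs are products of boolean signs; each identity below
   peels off the factors involving one point and compares the rest pairwise. *)
Section SignIdentities.
Variable X : finType.
Implicit Types (A B C : {set X}) (f : X -> X).

Lemma bsignF : bsign false = 1. Proof. by []. Qed.

Lemma bsign_antisym (x y : X) : x != y -> bsign (rk x < rk y)%N = - bsign (rk y < rk x)%N.
Proof. by move/rk_neq; case: (ltngtP (rk x) (rk y)) => // _ _; rewrite /bsign; ring. Qed.

Lemma bsign_pair (y a fy fa : nat) : (y != a)%N -> (fy != fa)%N ->
  bsign (y < a)%N =
  bsign ((a < y) && (fy < fa))%N * bsign ((y < a) && (fa < fy))%N * bsign (fy < fa)%N.
Proof.
move=> h1 h2; case: (ltngtP y a) h1 => // _ _; case: (ltngtP fy fa) h2 => // _ _;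
  rewrite /bsign /=; ring.
Qed.

Lemma bsign_exchange (y a a' fy v : nat) : (y != a)%N -> (y != a')%N -> (fy != v)%N ->
  bsign (y < a)%N * (bsign ((a' < y) && (fy < v))%N * bsign ((y < a') && (v < fy))%N) =
  bsign (y < a')%N * (bsign ((a < y) && (fy < v))%N * bsign ((y < a) && (v < fy))%N).
Proof.
move=> h1 h2 h3; case: (ltngtP y a) h1 => // _ _; case: (ltngtP y a') h2 => // _ _;
  case: (ltngtP fy v) h3 => // _ _; rewrite /bsign /=; ring.
Qed.

Lemma subset_face C A : C \subset A -> #|A| = (#|C|).+1 ->
  exists2 c, c \in A & C = A :\ c.
Proof.
move=> sCA hA.
have /cards1P [c hc] : #|A :\: C| == 1%N by rewrite cardsD (setIidPr sCA) hA subSnn.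
have cAC : c \in A :\: C by rewrite hc set11.
exists c; first by move: cAC; rewrite inE => /andP[].
apply/setP => x; rewrite !inE.
case xC : (x \in C).
  rewrite (subsetP sCA _ xC) andbT; apply/esym/eqP => exc.
  by move: cAC; rewrite -exc inE xC.
case xA : (x \in A); rewrite ?andbF ?andbT //.
have : x \in A :\: C by rewrite inE xC xA.
by rewrite hc inE => ->.
Qed.

Lemma face_signD1 A a : a \in A -> face_sign A a = \prod_(y in A :\ a) bsign (rk y < rk a)%N.
Proof. by move=> aA; rewrite /face_sign (big_setD1 _ aA) /= ltnn bsignF mul1r. Qed.

(* d o d = 0 at the level of signs: removing a then b, or b then a, gives
   opposite signs. *)
Lemma face_sign_swap A a b : a \in A -> b \in A -> a != b ->
  face_sign A a * face_sign (A :\ a) b + face_sign A b * face_sign (A :\ b) a = 0.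
Proof.
move=> aA bA ab.
rewrite {1}/face_sign (big_setD1 _ bA) /= [X in _ + X * _]/face_sign (big_setD1 _ aA) /=.
rewrite -/(face_sign (A :\ b) a) -/(face_sign (A :\ a) b) (bsign_antisym ab); ring.
Qed.

Lemma sort_signD1 f A a : a \in A ->
  sort_sign f A = sort_sign f (A :\ a) *
   \prod_(y in A :\ a) (bsign ((rk a < rk y) && (rk (f y) < rk (f a)))%N *
                        bsign ((rk y < rk a) && (rk (f a) < rk (f y)))%N).
Proof.
move=> aA; rewrite /sort_sign (big_setD1 _ aA) /= (big_setD1 _ aA) /= ltnn /= bsignF mul1r.
under [X in _ * X = _]eq_bigr => u _ do rewrite (big_setD1 _ aA) /=.
rewrite big_split /= big_split /=; ring.
Qed.

Lemma face_sign_img f A a : a \in A -> {in A &, injective f} ->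
  face_sign (f @: A) (f a) = \prod_(y in A :\ a) bsign (rk (f y) < rk (f a))%N.
Proof.
by move=> aA injf; rewrite /face_sign big_imset //= (big_setD1 _ aA) /= ltnn bsignF mul1r //.
Qed.

(* f_# o d = d o f_# on a simplex where f is injective: the face signs of A
   and of f(A) are related through the sorting signs. *)
Lemma sort_sign_face f A a : a \in A -> {in A &, injective f} ->
  face_sign A a * sort_sign f (A :\ a) = sort_sign f A * face_sign (f @: A) (f a).
Proof.
move=> aA injf.
rewrite (sort_signD1 f aA) face_signD1 // face_sign_img //.
move: (sort_sign f (A :\ a)) => S; rewrite -mulrA -big_split /= mulrC.
congr (_ * _); apply: eq_bigr => y; rewrite !inE => /andP[ya yA].
rewrite (@bsign_pair _ _ (rk (f y)) (rk (f a))) ?rk_neq //.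
by apply: contra ya => /eqP /injf ->.
Qed.

(* f_# o d = d o f_# on a simplex collapsed by f: the two faces A :\ a and
   A :\ a', where f a = f a', have the same image and cancel. *)
Lemma sort_sign_collapse f A a a' : a \in A -> a' \in A -> a != a' -> f a = f a' ->
  {in A :\ a &, injective f} ->
  face_sign A a * sort_sign f (A :\ a) + face_sign A a' * sort_sign f (A :\ a') = 0.
Proof.
move=> aA a'A aa' fe injf.
have a'Aa : a' \in A :\ a by rewrite !inE eq_sym aa'.
have aAa' : a \in A :\ a' by rewrite !inE aa'.
rewrite (sort_signD1 f a'Aa) (sort_signD1 f aAa') (face_signD1 aA) (face_signD1 a'A).
rewrite (big_setD1 _ a'Aa) /= (big_setD1 _ aAa') /= [A :\ a' :\ a]setDDl setUC -setDDl -fe.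
move: (sort_sign f (A :\ a :\ a')) => s2.
set A2 := A :\ a :\ a'.
set Q1 := \prod_(y in A2) (bsign ((rk a' < rk y) && (rk (f y) < rk (f a)))%N *
                          bsign ((rk y < rk a') && (rk (f a) < rk (f y)))%N).
set Q2 := \prod_(y in A2) (bsign ((rk a < rk y) && (rk (f y) < rk (f a)))%N *
                          bsign ((rk y < rk a) && (rk (f a) < rk (f y)))%N).
set P1 := \prod_(y in A2) bsign (rk y < rk a)%N.
set P2 := \prod_(y in A2) bsign (rk y < rk a')%N.
have exchange : P1 * Q1 = P2 * Q2.
  rewrite -!big_split /=; apply: eq_bigr => y; rewrite !inE => /and3P[ya' ya yA].
  apply: bsign_exchange; rewrite ?rk_neq // fe.
  by apply: contra ya' => /eqP /injf -> //; rewrite !inE ?ya ?yA.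
rewrite (bsign_antisym aa').
have -> : bsign (rk a' < rk a)%N * P1 * (s2 * Q1) =
          bsign (rk a' < rk a)%N * s2 * (P1 * Q1) by ring.
rewrite exchange; ring.
Qed.

End SignIdentities.

Section ChainComplex.
Variables (X : finType) (k : rel X).
Implicit Types (A B C : {set X}).

Definition bd_coef A B : rat :=
  if B \subset A then (-1) ^+ find (fun y => y \notin B) (enum A) else 0.

Lemma bdmxE q i j : bdmx k q i j = bd_coef (simpl_of i) (simpl_of j).
Proof. by rewrite mxE. Qed.

Lemma bd_coefD1 A a : a \in A -> bd_coef A (A :\ a) = face_sign A a.
Proof. by move=> aA; rewrite /bd_coef subsetDl face_signE. Qed.

Lemma bd_coef0 A B : ~~ (B \subset A) -> bd_coef A B = 0.
Proof. by rewrite /bd_coef => /negbTE ->. Qed.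

Lemma cliqueP A : reflect (forall x y, x \in A -> y \in A -> x != y -> k x y)
  [forall x in A, forall y in A, (x != y) ==> k x y].
Proof.
apply: (iffP forallP) => [h x y xA yA xy|h x].
  by have := h x; rewrite xA /= => /forallP /(_ y); rewrite yA xy.
by apply/implyP => xA; apply/forallP => y; apply/implyP => yA; apply/implyP; apply: h.
Qed.

Lemma simpE q A : (A \in simp k q) =
  (#|A| == q.+1) && [forall x in A, forall y in A, (x != y) ==> k x y].
Proof. by rewrite inE. Qed.

Lemma simp_card q A : A \in simp k q -> #|A| = q.+1.
Proof. by rewrite simpE => /andP[/eqP]. Qed.

Lemma simpD1 q A a : A \in simp k q.+1 -> a \in A -> A :\ a \in simp k q.
Proof.
rewrite !simpE => /andP[/eqP hA /cliqueP hc] aA; apply/andP; split.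
  by move: hA; rewrite (cardsD1 a) aA add1n => -[->].
apply/cliqueP => x y; rewrite !inE => /andP[_ xA] /andP[_ yA]; exact: hc.
Qed.

Lemma bdmx_row q (i : 'I_#|simp k q.+1|) (G : {set X} -> rat) :
  \sum_(j < #|simp k q|) bdmx k q i j * G (simpl_of j) =
  \sum_(a in simpl_of i) face_sign (simpl_of i) a * G (simpl_of i :\ a).
Proof.
set A := simpl_of i; have hA : A \in simp k q.+1 := enum_valP i.
under eq_bigr => j _ do rewrite bdmxE.
rewrite [LHS](_ : _ = \sum_(B in simp k q) bd_coef A B * G B); last first.
  by rewrite [RHS]big_enum_val.
rewrite (big_setID [set A :\ a | a in A]) /= [X in _ + X]big1 ?addr0; last first.
  move=> B /setDP[hB hn]; rewrite /bd_coef; case: ifP => sBA; last by rewrite mul0r.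
  have [c cA eB] := subset_face sBA (etrans (simp_card hA) (congr1 S (esym (simp_card hB)))).
  by move: hn; rewrite eB (imset_f (fun a => A :\ a) cA).
rewrite (setIidPr _); last by apply/subsetP => B /imsetP[a aA ->]; apply: simpD1.
rewrite big_imset /=; last first.
  move=> a b aA bA e; apply/eqP; apply: contraT => ab.
  have : a \in A :\ b by rewrite !inE ab.
  by rewrite -e !inE eqxx.
by apply: eq_bigr => a aA; rewrite bd_coefD1.
Qed.

(* d o d = 0 on the coefficient of a (q)-simplex C in d d A: only the two
   faces of A containing C contribute, and they cancel. *)
Lemma bd_bd_coef q A C : A \in simp k q.+2 -> C \in simp k q ->
  \sum_(a in A) face_sign A a * bd_coef (A :\ a) C = 0.
Proof.
move=> hA hC.
case sCA : (C \subset A); last first.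
  apply: big1 => a aA; rewrite bd_coef0 ?mulr0 //; apply: contraFN sCA => h.
  exact: subset_trans h (subsetDl _ _).
have : (0 < #|A :\: C|)%N.
  by rewrite cardsD (setIidPr sCA) (simp_card hA) (simp_card hC) subSn.
rewrite card_gt0 => /set0Pn [a /setDP [aA aC]].
have sCAa : C \subset A :\ a.
  apply/subsetP => x xC; rewrite !inE (subsetP sCA _ xC) andbT.
  by apply: contraNneq aC => <-.
have [b bAa eC] : exists2 b, b \in A :\ a & C = A :\ a :\ b.
  apply: subset_face sCAa _; rewrite (simp_card hC); have := cardsD1 a A.
  by rewrite aA (simp_card hA) add1n => -[<-].
have bA : b \in A by move: bAa; rewrite !inE => /andP[_ ->].
have ba : b != a by move: bAa; rewrite !inE => /andP[-> _].
rewrite (bigD1 a) //= (bigD1 b) /=; last by rewrite bA ba.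
rewrite big1 ?addr0; last first.
  move=> y /andP[/andP[yA ya] yb]; rewrite bd_coef0 ?mulr0 //.
  apply/negP => /subsetP /(_ y); rewrite eC !inE yb ya yA eqxx /=.
  by move/(_ isT).
rewrite eC bd_coefD1 // setDDl setUC -setDDl bd_coefD1; last by rewrite !inE eq_sym ba.
by rewrite (face_sign_swap aA bA) // eq_sym.
Qed.

Lemma bdmxK q : bdmx k q.+1 *m bdmx k q = 0.
Proof.
apply/matrixP => i l; rewrite !mxE.
under eq_bigr => j _ do rewrite (bdmxE j l).
rewrite (bdmx_row i (fun B => bd_coef B (simpl_of l))); apply: bd_bd_coef; exact: enum_valP.
Qed.

Section ChainMap.
Variable f : X -> X.
Hypothesis hf : dcontinuous k f.

Definition ch_coef q A B : rat :=
  if (f @: A == B) && (#|f @: A| == q.+1) then sort_sign f A else 0.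

Lemma chainmxE q i j : chainmx k f q i j = ch_coef q (simpl_of i) (simpl_of j).
Proof. by rewrite mxE /= sort_signE. Qed.

Lemma img_simp q A : A \in simp k q -> #|f @: A| == q.+1 -> f @: A \in simp k q.
Proof.
move=> hA hc; rewrite simpE hc /=.
apply/cliqueP => x y /imsetP[u uA ->] /imsetP[v vA ->] ne.
have uv : u != v by apply: contraNneq ne => ->.
move: hA; rewrite simpE => /andP[_ /cliqueP hc'].
by have := hf (hc' u v uA vA uv); rewrite /adjeq (negbTE ne).
Qed.

Lemma imsetD1_inj A a : a \in A -> {in A &, injective f} -> f @: (A :\ a) = f @: A :\ f a.
Proof.
move=> aA injf; apply/setP => z; rewrite !inE; apply/imsetP/andP.
  case=> y; rewrite !inE => /andP[ya yA] ->; split; last exact: imset_f.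
  by apply: contra ya => /eqP /injf ->.
case=> za /imsetP [y yA ez]; exists y => //; rewrite !inE yA andbT.
by apply: contraNneq za => ya; rewrite ez ya.
Qed.

Lemma imset_absorb A a : a \in A -> f a \in f @: (A :\ a) -> f @: (A :\ a) = f @: A.
Proof.
by move=> aA h; rewrite -{2}(setD1K aA) imsetU1; apply/esym/setUidPr; rewrite sub1set.
Qed.

(* f_# o d on a simplex A mapped injectively: only the face of A mapping onto
   C contributes, with the coefficient of C in d f_#(A). *)
Lemma chain_bd_inj q A C : A \in simp k q.+1 -> C \in simp k q -> #|f @: A| = q.+2 ->
  \sum_(a in A) face_sign A a * ch_coef q (A :\ a) C = sort_sign f A * bd_coef (f @: A) C.
Proof.
move=> hA hC hinj.
have injf : {in A &, injective f} by apply/imset_injP; rewrite hinj (simp_card hA).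
case sC : (C \subset f @: A); last first.
  rewrite bd_coef0 ?sC // mulr0; apply: big1 => a aA; rewrite /ch_coef.
  by case: eqP; rewrite ?mulr0 // => e; move: sC; rewrite -e imsetS // subsetDl.
have [c cfA eC] := subset_face sC (etrans hinj (congr1 S (esym (simp_card hC)))).
case/imsetP: cfA => a0 a0A ec; subst c.
rewrite (bigD1 a0) //= big1 ?addr0; last first.
  move=> a /andP[aA aa0]; rewrite /ch_coef imsetD1_inj // eC.
  case: eqP; rewrite ?mulr0 // => e.
  have : f a0 \in f @: A :\ f a.
    by rewrite !inE imset_f // andbT; apply: contra aa0 => /eqP /injf ->.
  by rewrite e !inE eqxx.
rewrite /ch_coef imsetD1_inj // -eC eqxx /= (simp_card hC) eqxx.
by rewrite eC bd_coefD1 ?imset_f // sort_sign_face.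
Qed.

(* f_# o d on a simplex A collapsed by f vanishes: at most two faces of A are
   mapped injectively, onto the same simplex, and their terms cancel. *)
Lemma chain_bd_collapse q A C : A \in simp k q.+1 -> #|f @: A| != q.+2 ->
  \sum_(a in A) face_sign A a * ch_coef q (A :\ a) C = 0.
Proof.
move=> hA hinj; have cA := simp_card hA.
have cAD1 y : y \in A -> #|A :\ y| = q.+1.
  by move=> yA; have := cardsD1 y A; rewrite yA cA add1n => -[].
case: (pickP (fun a => [&& a \in A, f @: (A :\ a) == C & #|f @: (A :\ a)| == q.+1]))
  => [a /and3P[aA /eqP e1 e2] | none]; last first.
  apply: big1 => a aA; rewrite /ch_coef; have := none a; rewrite aA /= => ->.
  by rewrite mulr0.
have injA : {in A :\ a &, injective f} by apply/imset_injP; rewrite cAD1.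
have : f a \in f @: (A :\ a).
  apply: contraNT hinj => h.
  by rewrite -(setD1K aA) imsetU1 cardsU1 h (eqP e2).
case/imsetP => a' a'Aa fe.
have a'A : a' \in A by move: a'Aa; rewrite !inE => /andP[_ ->].
have aa' : a != a' by move: a'Aa; rewrite !inE eq_sym => /andP[-> _].
have aAa' : a \in A :\ a' by rewrite !inE aa'.
have ea : f @: (A :\ a) = f @: A by apply: imset_absorb => //; rewrite fe imset_f.
have ea' : f @: (A :\ a') = f @: A by apply: imset_absorb => //; rewrite -fe imset_f.
rewrite (bigD1 a) //= (bigD1 a') /=; last by rewrite a'A eq_sym.
rewrite big1 ?addr0; last first.
  move=> y /andP[/andP[yA ya] ya']; rewrite /ch_coef.
  have : #|f @: (A :\ y)| != q.+1.
    rewrite -(cAD1 y yA); apply/imset_injP => inj.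
    have : a = a' by apply: inj => //; rewrite !inE ?aA ?a'A andbT // eq_sym.
    by move/eqP; rewrite (negbTE aa').
  by move/negbTE => ->; rewrite andbF mulr0.
rewrite /ch_coef ea' -ea e2 e1 eqxx /=.
exact: (sort_sign_collapse aA a'A aa' fe injA).
Qed.

Lemma chainmx_bdmx q : chainmx k f q.+1 *m bdmx k q = bdmx k q *m chainmx k f q.
Proof.
apply/matrixP => i l; rewrite !mxE.
under [RHS]eq_bigr => j _ do rewrite (chainmxE j l).
rewrite (bdmx_row i (fun B => ch_coef q B (simpl_of l))).
set A := simpl_of i; set C := simpl_of l.
have hA : A \in simp k q.+1 := enum_valP i; have hC : C \in simp k q := enum_valP l.
under eq_bigr => j _ do rewrite (chainmxE i j) (bdmxE j l).
rewrite (_ : \sum_(j < _) _ = \sum_(B in simp k q.+1) ch_coef q.+1 A B * bd_coef B C);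
  last by rewrite [RHS]big_enum_val.
have [hinj|hcol] := eqVneq #|f @: A| q.+2; last first.
  rewrite chain_bd_collapse //; apply: big1 => B _.
  by rewrite /ch_coef (negbTE hcol) andbF mul0r.
rewrite chain_bd_inj // (bigD1 (f @: A)) /=; last by apply: img_simp => //; apply/eqP.
rewrite big1 ?addr0; last by move=> B /andP[_ nB]; rewrite /ch_coef eq_sym (negbTE nB) mul0r.
by rewrite /ch_coef eqxx hinj eqxx.
Qed.

End ChainMap.
End ChainComplex.

(* Trace splitting in degree q+1.  Let K := D EB R, where R inverts D on the
   boundaries (EB R D = EB).  If E1 and E2 decompose the image of 1 - K and
   F1 D kills both, then tr F1 = tr (F0 EB) + tr (F1 E1) + tr (F1 E2): the
   K-part moves down to degree q by F1 D = D F0 and cyclicity of the trace. *)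
Lemma trace_split n m (F0 : 'M[rat]_m) (F1 : 'M[rat]_n) (D : 'M[rat]_(n, m))
    (EB : 'M[rat]_m) (E1 E2 : 'M[rat]_n) (R : 'M[rat]_(m, n)) :
  F1 *m D = D *m F0 -> EB *m R *m D = EB ->
  E1 *m F1 *m D = 0 -> E2 *m F1 *m D = 0 ->
  (1 - D *m EB *m R) *m E1 + (1 - D *m EB *m R) *m E2 = 1 - D *m EB *m R ->
  \tr F1 = \tr (F0 *m EB) + \tr (F1 *m E1) + \tr (F1 *m E2).
Proof.
move=> commF hR h1 h2 hsplit; set K := D *m EB *m R.
have -> : \tr F1 = \tr (F1 *m K + F1 *m ((1 - K) *m E1) + F1 *m ((1 - K) *m E2)).
  by rewrite -addrA -mulmxDr hsplit -mulmxDr addrC subrK mulmx1.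
have killed E : E *m F1 *m D = 0 -> \tr (F1 *m ((1 - K) *m E)) = \tr (F1 *m E).
  move=> hE; rewrite mulmxBl mul1mx mulmxBr linearB /= mulmxA (mxtrace_mulC (F1 *m K) E).
  by rewrite /K !mulmxA hE !mul0mx linear0 subr0.
rewrite !mxtraceD killed // killed //; congr (_ + _ + _).
by rewrite /K !mulmxA commF -!mulmxA mxtrace_mulC -!mulmxA (mulmxA EB) hR.
Qed.

Section HopfTrace.
Variables (X : finType) (k : rel X) (f : X -> X).
Hypothesis bdK : forall q, bdmx k q.+1 *m bdmx k q = 0.
Hypothesis chain_comm : forall q, chainmx k f q.+1 *m bdmx k q = bdmx k q *m chainmx k f q.

Local Notation D := (bdmx k).
Local Notation F := (chainmx k f).
Local Notation Z := (cyclesmx k).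
Local Notation B := (boundmx k).
(* W q represents homology: a complement of the boundaries in the cycles. *)
Local Notation W q := (Z q :\: B q)%MS.
Local Notation EB q := (proj_mx (B q) (W q)).
Local Notation EH q := (proj_mx (W q) (B q)).

Lemma bound_cap_homology q : (B q :&: W q = 0)%MS.
Proof. by rewrite capmxC capmx_diff. Qed.

Lemma cycles_split q : (Z q <= B q + W q)%MS.
Proof.
rewrite addsmxC; apply: submx_trans (addsmxS (submx_refl _) (capmxSr (Z q) (B q))).
by rewrite addsmx_diff_cap_eq.
Qed.

Lemma trace_homology q : \tr (homology_mx k f q) = \tr (F q *m EH q).
Proof.
rewrite /homology_mx; set P := proj_mx _ _; set h := hbasis k q.
have hs : (P <= h)%MS.
  have := proj_mx_sub (W q) (B q) 1%:M; rewrite mul1mx.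
  by rewrite /h /hbasis eq_row_base.
clearbody P h.
by rewrite -!mulmxA (mxtrace_mulC h) -mulmxA (mulmxKpV hs).
Qed.

Lemma EB_bd_sub q : (EB q <= D q)%MS.
Proof. by have := proj_mx_sub (B q) (W q) 1%:M; rewrite mul1mx /boundmx genmxE. Qed.

(* f maps boundaries to boundaries, and cycles to cycles, so F o D kills both. *)
Lemma EB_chain_bd q : EB q.+1 *m F q.+1 *m D q = 0.
Proof.
rewrite -mulmxA chain_comm mulmxA.
by case/submxP: (EB_bd_sub q.+1) => M ->; rewrite -(mulmxA M) bdK mulmx0 mul0mx.
Qed.

Lemma EH_chain_bd q : EH q.+1 *m F q.+1 *m D q = 0.
Proof.
rewrite -mulmxA chain_comm mulmxA.
have := proj_mx_sub (W q.+1) (B q.+1) 1%:M; rewrite mul1mx => h.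
have : (EH q.+1 <= Z q.+1)%MS by apply: submx_trans h (diffmxSl _ _).
by rewrite /= sub_kermx => /eqP ->; rewrite mul0mx.
Qed.

Definition bd_retract q := D q *m EB q *m pinvmx (D q).

Lemma bd_retract_bd q : bd_retract q *m D q = D q.
Proof.
have EBD : D q *m EB q = D q by rewrite proj_mx_id ?bound_cap_homology // /boundmx genmxE.
rewrite /bd_retract; move: (mulmxKpV (EB_bd_sub q)) EBD; move: (EB q) => E hE EBD.
have -> : D q *m E *m pinvmx (D q) *m D q = D q *m (E *m pinvmx (D q) *m D q).
  by rewrite !mulmxA.
by rewrite hE EBD.
Qed.

Lemma one_sub_retract_cycles q : (1 - bd_retract q <= Z q.+1)%MS.
Proof. by rewrite /= sub_kermx mulmxBl mul1mx bd_retract_bd subrr. Qed.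

Lemma trace_chain_succ q : \tr (F q.+1) =
  \tr (F q *m EB q) + \tr (F q.+1 *m EB q.+1) + \tr (F q.+1 *m EH q.+1).
Proof.
apply: trace_split (chain_comm q) (mulmxKpV (EB_bd_sub q)) (EB_chain_bd q) (EH_chain_bd q) _.
apply: add_proj_mx; first exact: bound_cap_homology.
exact: submx_trans (one_sub_retract_cycles q) (cycles_split _).
Qed.

(* In degree 0 every chain is a cycle, so tr F 0 splits into two terms. *)
Lemma trace_chain_0 : \tr (F 0) = \tr (F 0 *m EB 0) + \tr (F 0 *m EH 0).
Proof.
rewrite -mxtraceD -mulmxDr.
by have := add_proj_mx (bound_cap_homology 0) (cycles_split 0); rewrite /= !mul1mx => ->;
  rewrite mulmx1.
Qed.

Lemma simp_empty q : (#|X| <= q)%N -> #|simp k q| = 0%N.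
Proof.
move=> hq; apply/eqP; rewrite cards_eq0; apply/eqP/setP => A; rewrite !inE.
apply/negbTE; apply/negP => /andP[/eqP hA _].
by have := max_card A; rewrite hA ltnNge hq.
Qed.

Lemma EB_top q : (#|X| <= q.+1)%N -> EB q = 0.
Proof.
move=> hq; have hD : D q = 0.
  apply/matrixP => i j; exfalso; have := ltn_ord i.
  by move: (nat_of_ord i) => x; rewrite simp_empty.
by have := proj_mx_sub (B q) (W q) 1%:M; rewrite mul1mx /boundmx hD genmx0 submx0 => /eqP.
Qed.

Lemma hopf_trace : lefschetz k f = \sum_(q < #|X|) (-1) ^+ q * \tr (F q).
Proof.
pose b q := \tr (F q *m EB q).
have h0 : \tr (homology_mx k f 0) = \tr (F 0) - b 0.
  by rewrite trace_homology trace_chain_0 /b; ring.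
have hS q : \tr (homology_mx k f q.+1) = \tr (F q.+1) - b q - b q.+1.
  by rewrite trace_homology trace_chain_succ /b; ring.
have telescope n : \sum_(q < n.+1) (-1) ^+ q * \tr (homology_mx k f q) =
    \sum_(q < n.+1) (-1) ^+ q * \tr (F q) + (-1) ^+ n.+1 * b n.
  elim: n => [|n IH]; first by rewrite !big_ord1 h0 /=; ring.
  by rewrite big_ord_recr [in RHS]big_ord_recr /= IH hS !exprS; ring.
rewrite /lefschetz; case hX : #|X| => [|n]; first by rewrite !big_ord0.
by rewrite telescope /b EB_top ?hX // mulmx0 linear0 mulr0 addr0.
Qed.

End HopfTrace.

Section ApproximateFixedPoints.
Variables (X : finType) (k : rel X).

(* A map without approximate fixed points fixes no simplex setwise, so all
   diagonal entries of its chain matrices vanish. *)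
Lemma chainmx_trace0 (f : X -> X) (free : forall x, ~~ adjeq k (f x) x) q :
  \tr (chainmx k f q) = 0.
Proof.
apply: big1 => i _; rewrite chainmxE /ch_coef.
set A := simpl_of i; have hA : A \in simp k q := enum_valP i.
case: eqP => //= e.
have : (0 < #|A|)%N by rewrite (simp_card hA).
rewrite card_gt0 => /set0Pn [x xA].
have fxA : f x \in A by rewrite -e imset_f.
move: hA; rewrite simpE => /andP[_ /cliqueP hc].
by have := free x; rewrite /adjeq; case: eqP => //= ne; rewrite hc //; apply/eqP.
Qed.

(* Absence of approximate fixed points is invariant under strong homotopy:
   if y := H(x, t+1) were adjacent or equal to x, then (y, t) and (x, t+1)
   would be neighbours, so H(y, t) would be adjacent or equal to y. *)
Lemma homotopy_no_approx_fixed (g f : X -> X) :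
  strongly_homotopic k g f -> (forall x, ~~ adjeq k (g x) x) ->
  forall x, ~~ adjeq k (f x) x.
Proof.
case=> m [H [_ [H0 [Hm Hadj]]]] hg.
suff free t : (t <= m)%N -> forall x, ~~ adjeq k (H x t) x.
  by move=> x; rewrite -Hm; exact: free.
elim: t => [_ x|t IH ht x]; first by rewrite H0; exact: hg.
apply/negP => hx; have ht' := ltnW ht.
have := Hadj (H x t.+1) x t t.+1 ht' ht (fun e => n_Sn _ (congr1 snd e)) hx
  (leqW (leqnSn t)) (leqnn _).
by apply/negP; exact: IH.
Qed.

Lemma approx_fixed_image (g : X -> X) (hg : dcontinuous k g) x :
  approx_fixed k g x -> g x != x -> approx_fixed k g (g x).
Proof. by rewrite /approx_fixed /adjeq => /orP[/eqP ->|gx _]; [rewrite eqxx | exact: hg]. Qed.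

End ApproximateFixedPoints.

Theorem corollary3p5 (X : finType) (k : rel X)
    (k_sym : symmetric k) (k_irr : irreflexive k)
    (f : X -> X) (hf : dcontinuous k f) (hL : lefschetz k f != 0)
    (g : X -> X) (hg : dcontinuous k g) (hgf : strongly_homotopic k g f) :
  (exists x, g x = x) \/
  (exists x y, x != y /\ approx_fixed k g x /\ approx_fixed k g y).
Proof.
have [/existsP [x hx] | /existsPn free_g] := boolP [exists x, adjeq k (g x) x].
  have [gx_x | gx_neq] := eqVneq (g x) x; first by left; exists x.
  right; exists x, (g x); rewrite eq_sym gx_neq.
  by split=> //; split=> //; exact: approx_fixed_image.
have free_f := homotopy_no_approx_fixed hgf free_g.
suff : lefschetz k f = 0 by move/eqP; rewrite (negbTE hL).
rewrite (hopf_trace (bdmxK k) (chainmx_bdmx hf)).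
by apply: big1 => q _; rewrite chainmx_trace0 // mulr0.
Qed.
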